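(* Let $s\in\mathbb C$ with $\mathrm{Re}\,s>-2$. Then: (1) for every prime $p\ne3$, $$\sum_{k=0}^{\infty}\frac{T(p^k)}{p^{ks}}=\frac{1}{1-p^{-(3s+6)}}\Big(1+\frac{1}{p^{s+7}}\sum_{c=1}^{p-1}|S(p,c)|^6+\frac{p-1}{p^{2s+7}}-\frac{1}{p^{3s+7}}\Big);$$ (2) $$\sum_{k=0}^{\infty}\frac{T(3^k)}{3^{ks}}=\frac{1}{1-3^{-(3s+6)}}\Big(1+\frac{1}{3^{2s+14}}\sum_{\substack{c=1\\(c,3)=1}}^{9}|S(9,c)|^6-\frac{1}{3^{3s+7}}\Big),$$ the series converging absolutely.
   Context: Write $e(\alpha)=e^{2\pi i\alpha}$. For integers $q\ge1$ and $c$, $S(q,c)=\sum_{m=1}^{q}e(cm^3/q)$, and $T(q)=q^{-7}\sum_{1\le c\le q,(c,q)=1}|S(q,c)|^6$. *)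

From Stdlib Require Import Reals ZArith Znumtheory.
From Coquelicot Require Import Coquelicot.
Open Scope R_scope.

Definition e (a : R) : C := (cos (2 * PI * a), sin (2 * PI * a)).

Definition S (q : nat) (c : Z) : C :=
  sum_n_m (G := C_AbelianMonoid) (fun m : nat => e (IZR c * INR m ^ 3 / INR q)) 1 q.

Definition T (q : nat) : R :=
  / (INR q ^ 7) *
  sum_n_m (G := R_AbelianMonoid)
    (fun c : nat => if Nat.eqb (Nat.gcd c q) 1 then Cmod (S q (Z.of_nat c)) ^ 6 else 0)
    1 q.

(* complex power x^z for a real base x > 0: exp(z ln x) *)
Definition cpow (x : R) (z : C) : C :=
  RtoC (exp (Re z * ln x)) * (cos (Im z * ln x), sin (Im z * ln x)).

From Stdlib Require Import Reals ZArith Znumtheory Lia Lra.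
From Coquelicot Require Import Coquelicot.

(** For a prime [p] and [B_k = sum_(c < p^k, p ∤ c) |S(p^k,c)|^6] we have
    [T(p^k) = p^(-7k) B_k] for [k >= 1].  The heart of the argument is the
    recursion [S(p^(k+3),c) = p^2 S(p^k,c)] for [p ∤ c] (valid for [k >= 1],
    and also for [k = 0] when [p = 3]): splitting [m = u + p^(k+1) v], the cube
    expansion turns the sum over [v] into a character sum modulo [p^2], which by
    orthogonality keeps only [u = p w].  With periodicity in [c] this gives
    [B_(k+3) = p^15 B_k]; the same reduction evaluates [|S(p^2,c)| = p]
    ([p <> 3]), [|S(p^3,c)| = p^2] and [S(3,c) = 0].

    Hence, with [D = p^(s+7)], the terms [t_k = B_k / D^k] satisfy
    [t_(k+3) = (p^15 / D^3) t_k] with [|p^15 / D^3| < 1] exactly when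
    [Re s > -2], so the Euler factor is [1 + (t_1 + t_2 + t_3)/(1 - p^15/D^3)],
    which rearranges to the closed forms of the theorem. *)

Local Open Scope R_scope.
Local Notation succ := Datatypes.S.

Fixpoint fsum {G : AbelianMonoid} (n : nat) (f : nat -> G) : G :=
  match n with O => zero | succ n => plus (fsum n f) (f n) end.

Section FiniteSums.
Context {G : AbelianMonoid}.

Lemma fsum_ext n (f g : nat -> G) :
  (forall i, (i < n)%nat -> f i = g i) -> fsum n f = fsum n g.
Proof. induction n; simpl; intros H; auto. rewrite IHn, H; auto. Qed.

Lemma fsum_zero n : fsum n (fun _ => zero) = (zero : G).
Proof. induction n; simpl; auto. rewrite IHn. apply plus_zero_l. Qed.

Lemma fsum_plus n (f g : nat -> G) :
  fsum n (fun i => plus (f i) (g i)) = plus (fsum n f) (fsum n g).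
Proof.
  induction n; simpl. { symmetry. apply plus_zero_l. }
  rewrite IHn, <- !plus_assoc. f_equal. rewrite plus_comm, <- plus_assoc.
  f_equal. apply plus_comm.
Qed.

Lemma fsum_app a b (f : nat -> G) :
  fsum (a + b) f = plus (fsum a f) (fsum b (fun i => f (a + i)%nat)).
Proof.
  induction b; simpl. { rewrite Nat.add_0_r. symmetry. apply plus_zero_r. }
  rewrite Nat.add_succ_r; simpl. rewrite IHb. symmetry. apply plus_assoc.
Qed.

Lemma fsum_first n (f : nat -> G) :
  fsum (succ n) f = plus (f O) (fsum n (fun i => f (succ i))).
Proof. change (succ n) with (1 + n)%nat. rewrite fsum_app. simpl. now rewrite plus_zero_l. Qed.

Lemma fsum_block U V (f : nat -> G) :
  fsum (U * V) f = fsum U (fun u => fsum V (fun v => f (u + U * v)%nat)).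
Proof.
  induction V.
  - rewrite Nat.mul_0_r. simpl. symmetry. apply fsum_zero.
  - replace (U * succ V)%nat with (U * V + U)%nat by lia.
    rewrite fsum_app, IHV, <- fsum_plus. apply fsum_ext. intros u _. simpl.
    do 2 f_equal. lia.
Qed.

Lemma sum_n_m_fsum q (f : nat -> G) : sum_n_m f 1 q = fsum q (fun i => f (succ i)).
Proof.
  induction q. { rewrite sum_n_m_zero by lia. reflexivity. }
  rewrite sum_n_Sm by lia. now rewrite IHq.
Qed.

Lemma sum_n_fsum n (f : nat -> G) : sum_n f n = fsum (succ n) f.
Proof.
  induction n. { rewrite sum_O. simpl. symmetry. apply plus_zero_l. }
  unfold sum_n in *. rewrite sum_n_Sm by lia. now rewrite IHn.
Qed.

End FiniteSums.

Lemma fsum_shift {G : AbelianGroup} n (f : nat -> G) :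
  f n = f O -> fsum n (fun i => f (succ i)) = fsum n f.
Proof.
  intros Hn. apply (plus_reg_l (f O)).
  rewrite <- fsum_first. simpl. rewrite Hn. apply plus_comm.
Qed.

Lemma fsum_mult_l {K : Ring} (a : K) n (f : nat -> K) :
  mult a (fsum n f) = fsum n (fun i => mult a (f i)).
Proof. induction n; simpl. { apply mult_zero_r. } now rewrite mult_distr_l, IHn. Qed.

Lemma fsum_const n (a : R) : (fsum n (fun _ => a) : R) = INR n * a.
Proof.
  induction n; simpl fsum. { simpl. change (zero : R) with 0. ring. }
  rewrite IHn, S_INR. change (plus (INR n * a) a) with (INR n * a + a). ring.
Qed.

Lemma fsum_RtoC n (f : nat -> R) : fsum n (fun i => RtoC (f i)) = RtoC (fsum n f).
Proof. induction n; simpl; auto. rewrite IHn. symmetry. apply RtoC_plus. Qed.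

Lemma e_add x y : e (x + y) = (e x * e y)%C.
Proof.
  unfold e. replace (2 * PI * (x + y)) with (2 * PI * x + 2 * PI * y) by ring.
  apply injective_projections; simpl; [rewrite cos_plus | rewrite sin_plus]; ring.
Qed.

Lemma e_nat n : e (INR n) = RtoC 1.
Proof.
  unfold e. replace (2 * PI * INR n) with (0 + 2 * INR n * PI) by ring.
  rewrite cos_period, sin_period, cos_0, sin_0. reflexivity.
Qed.

Lemma e_shift x n : e (x + INR n) = e x.
Proof. rewrite e_add, e_nat. apply Cmult_1_r. Qed.

Lemma e_ne1 x : 0 < x < 1 -> e x <> RtoC 1.
Proof.
  intros Hx He. assert (Hcos : cos (2 * (PI * x)) = 1).
  { rewrite <- Rmult_assoc. change (fst (e x) = fst (RtoC 1)). now rewrite He. }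
  rewrite cos_2a_sin in Hcos.
  assert (0 < sin (PI * x)) by (apply sin_gt_0; pose proof PI_RGT_0; nra).
  nra.
Qed.

Lemma fixed_by_rotation_zero (z w : C) : z <> RtoC 1 -> (z * w)%C = w -> w = RtoC 0.
Proof.
  intros Hz Hw. assert (Hz1 : (z - RtoC 1)%C <> RtoC 0).
  { intros E. apply Hz. replace z with (z - RtoC 1 + RtoC 1)%C by ring. rewrite E. ring. }
  replace w with (/ (z - RtoC 1) * ((z * w) - w))%C by (field; auto).
  rewrite Hw. ring.
Qed.

Lemma char_sum_divisible a V : (0 < V)%nat -> (a mod V = 0)%nat ->
  fsum V (fun v => e (INR (a * v) / INR V)) = RtoC (INR V).
Proof.
  intros HV Ha. assert (HVr : INR V <> 0) by (apply not_0_INR; lia).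
  rewrite (fsum_ext _ _ (fun _ => RtoC 1)).
  - rewrite fsum_RtoC, fsum_const. f_equal. ring.
  - intros v _. rewrite (Nat.div_mod_eq a V), Ha, Nat.add_0_r.
    replace (INR (V * (a / V) * v) / INR V) with (INR (a / V * v)).
    + apply e_nat.
    + rewrite !mult_INR. field. auto.
Qed.

Lemma char_sum_not_divisible a V : (0 < V)%nat -> (a mod V <> 0)%nat ->
  fsum V (fun v => e (INR (a * v) / INR V)) = RtoC 0.
Proof.
  intros HV Ha. assert (HVr : INR V <> 0) by (apply not_0_INR; lia).
  set (z := e (INR a / INR V)).
  apply (fixed_by_rotation_zero z).
  - (* [a/V] is congruent mod 1 to the fraction [(a mod V)/V] in (0,1) *)
    unfold z. rewrite (Nat.div_mod_eq a V), plus_INR, mult_INR.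
    replace ((INR V * INR (a / V) + INR (a mod V)) / INR V)
      with (INR (a mod V) / INR V + INR (a / V)) by (field; auto).
    rewrite e_shift. apply e_ne1. split.
    + apply Rdiv_lt_0_compat; apply lt_0_INR; lia.
    + apply Rmult_lt_reg_r with (INR V). { apply lt_0_INR; lia. }
      unfold Rdiv. rewrite Rmult_assoc, Rinv_l, Rmult_1_r, Rmult_1_l by auto.
      apply lt_INR, Nat.mod_upper_bound. lia.
  - rewrite (fsum_mult_l (K := C_Ring)).
    transitivity (fsum V (fun v => e (INR (a * succ v) / INR V))).
    + apply fsum_ext. intros v _. unfold z. rewrite <- e_add. f_equal.
      rewrite !mult_INR, S_INR. field. auto.
    + apply (fsum_shift V (fun v => e (INR (a * v) / INR V))).
      rewrite Nat.mul_0_r. replace (INR (a * V) / INR V) with (0 + INR a)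
        by (rewrite mult_INR; field; auto).
      rewrite e_shift. f_equal. simpl. unfold Rdiv. ring.
Qed.

Definition Snat (q c : nat) : C := fsum q (fun m => e (INR c * INR m ^ 3 / INR q)).

Lemma S_Snat q c : (1 <= q)%nat -> S q (Z.of_nat c) = Snat q c.
Proof.
  intros Hq. assert (Hqr : INR q <> 0) by (apply not_0_INR; lia).
  unfold S, Snat. rewrite sum_n_m_fsum, <- INR_IZR_INZ.
  apply (fsum_shift q (fun m => e (INR c * INR m ^ 3 / INR q))).
  replace (INR c * INR q ^ 3 / INR q) with (0 + INR (c * q * q))
    by (rewrite !mult_INR; field; auto).
  rewrite e_shift. f_equal. simpl. unfold Rdiv. ring.
Qed.

Lemma Snat_periodic q c t : (1 <= q)%nat -> Snat q (c + q * t) = Snat q c.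
Proof.
  intros Hq. assert (Hqr : INR q <> 0) by (apply not_0_INR; lia).
  apply fsum_ext. intros m _.
  replace (INR (c + q * t) * INR m ^ 3 / INR q)
    with (INR c * INR m ^ 3 / INR q + INR (t * m * m * m))
    by (rewrite !plus_INR, !mult_INR; field; auto).
  apply e_shift.
Qed.

Lemma e_cube_expand (c u v U V q al be : nat) : q = (U * V)%nat -> (0 < U)%nat -> (0 < V)%nat ->
  (3 * U * U = q * al)%nat -> (U * U * U = q * be)%nat ->
  e (INR c * INR (u + U * v) ^ 3 / INR q) =
  (e (INR c * INR u ^ 3 / INR q) * e (INR (c * 3 * u * u * v) / INR V))%C.
Proof.
  intros Hq HU HV Ha Hb. subst q.
  assert (HUr : INR U <> 0) by (apply not_0_INR; lia).
  assert (HVr : INR V <> 0) by (apply not_0_INR; lia).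
  apply (f_equal INR) in Ha. apply (f_equal INR) in Hb. rewrite !mult_INR in Ha, Hb.
  simpl INR in Ha.
  assert (Ha' : INR al = (1 + 1 + 1) * INR U * INR U / (INR U * INR V))
    by (rewrite Ha; field; auto).
  assert (Hb' : INR be = INR U * INR U * INR U / (INR U * INR V))
    by (rewrite Hb; field; auto).
  rewrite <- e_add, <- (e_shift (INR c * INR u ^ 3 / INR (U * V) + INR (c * 3 * u * u * v) / INR V)
                               (c * (u * v * v * al + v * v * v * be))).
  f_equal. rewrite !mult_INR, !plus_INR, !mult_INR, Ha', Hb'. simpl INR. field. auto.
Qed.

Lemma fsum_multiples p W (h : nat -> C) : (0 < p)%nat ->
  fsum (p * W) (fun u => if (u mod p =? 0)%nat then h u else RtoC 0) =
  fsum W (fun w => h (p * w)%nat).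
Proof.
  intros Hp. rewrite fsum_block. replace p with (succ (p - 1)) at 1 by lia.
  rewrite fsum_first.
  rewrite (fsum_ext (p - 1) _ (fun _ => zero)).
  - rewrite fsum_zero, plus_zero_r. apply fsum_ext. intros w _.
    rewrite Nat.add_0_l, Nat.mul_comm, Nat.Div0.mod_mul. reflexivity.
  - intros i Hi. rewrite (fsum_ext _ _ (fun _ => zero)); [apply fsum_zero|].
    intros w _. replace ((succ i + p * w) mod p)%nat with (succ i); [reflexivity|].
    rewrite (Nat.mul_comm p w), Nat.Div0.mod_add, Nat.mod_small; lia.
Qed.

(** Reduction of a cubic sum: write [q = U V] with [U = p W] and [m = u + U v].
    By [e_cube_expand] the sum over [v] is a character sum modulo [V], which by
    orthogonality keeps exactly the [u] with [V | 3 c u^2]; if these are the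
    multiples of [p], then [S(q,c) = V sum_(w < W) e(c (p w)^3 / q)]. *)
Lemma Snat_reduce p U V W q c al be : q = (U * V)%nat -> U = (p * W)%nat ->
  (0 < V)%nat -> (0 < W)%nat -> (0 < p)%nat ->
  (3 * U * U = q * al)%nat -> (U * U * U = q * be)%nat ->
  (forall u, ((c * 3 * u * u) mod V = 0)%nat <-> (u mod p = 0)%nat) ->
  Snat q c = (RtoC (INR V) * fsum W (fun w => e (INR c * INR (p * w) ^ 3 / INR q)))%C.
Proof.
  intros Hq HU HV HW Hp Ha Hb Hc. assert (HU0 : (0 < U)%nat) by (subst; lia).
  unfold Snat. rewrite Hq at 1. rewrite fsum_block.
  rewrite (fsum_ext U _ (fun u => if (u mod p =? 0)%nat
      then (RtoC (INR V) * e (INR c * INR u ^ 3 / INR q))%C else RtoC 0)).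
  - rewrite HU at 1. rewrite fsum_multiples by auto. symmetry. apply (fsum_mult_l (K := C_Ring)).
  - intros u _.
    rewrite (fsum_ext V _ (fun v => (e (INR c * INR u ^ 3 / INR q) *
                                      e (INR (c * 3 * u * u * v) / INR V))%C))
      by (intros v _; apply e_cube_expand with al be; auto).
    rewrite <- (fsum_mult_l (K := C_Ring)).
    destruct (u mod p =? 0)%nat eqn:E.
    + apply Nat.eqb_eq, Hc in E. rewrite char_sum_divisible by auto. apply Cmult_comm.
    + apply Nat.eqb_neq in E. rewrite <- Hc in E.
      rewrite char_sum_not_divisible by auto. apply Cmult_0_r.
Qed.

Lemma prime_ge2 p : prime (Z.of_nat p) -> (2 <= p)%nat.
Proof. intros H. apply prime_ge_2 in H. lia. Qed.

Lemma mod_zero_divide p a : (0 < p)%nat -> (a mod p = 0)%nat <-> (Z.of_nat p | Z.of_nat a)%Z.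
Proof. intros Hp. rewrite <- Z.mod_divide, <- Nat2Z.inj_mod; lia. Qed.

Lemma prime_mod_mult p a b : prime (Z.of_nat p) -> ((a * b) mod p = 0)%nat ->
  (a mod p = 0)%nat \/ (b mod p = 0)%nat.
Proof.
  intros Hp H. pose proof (prime_ge2 _ Hp).
  rewrite !mod_zero_divide by lia. rewrite mod_zero_divide, Nat2Z.inj_mul in H by lia.
  apply prime_mult; auto.
Qed.

Lemma coprime_prime_power p c j : prime (Z.of_nat p) -> (1 <= j)%nat ->
  (Nat.gcd c (p ^ j) =? 1)%nat = negb (c mod p =? 0)%nat.
Proof.
  intros Hp Hj. pose proof (prime_ge2 _ Hp).
  destruct (c mod p =? 0)%nat eqn:E; simpl.
  - apply Nat.eqb_eq in E. apply Nat.eqb_neq. intros Hg.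
    assert (Hd : Nat.divide p (Nat.gcd c (p ^ j))).
    { apply Nat.gcd_greatest. { apply Nat.Lcm0.mod_divide; lia. }
      replace j with (succ (j - 1)) by lia. apply Nat.divide_factor_l. }
    rewrite Hg in Hd. apply Nat.divide_1_r in Hd. lia.
  - apply Nat.eqb_neq in E. apply Nat.eqb_eq.
    assert (Hr : rel_prime (Z.of_nat c) (Z.of_nat p ^ Z.of_nat j)).
    { apply Zpow_facts.rel_prime_Zpower_r; [lia|].
      apply rel_prime_sym, prime_rel_prime; auto. rewrite <- mod_zero_divide; lia. }
    destruct (Nat.gcd_divide_l c (p ^ j)) as [k1 Hk1].
    destruct (Nat.gcd_divide_r c (p ^ j)) as [k2 Hk2].
    destruct Hr as [_ _ Hr].
    assert (Hz : (Z.of_nat (Nat.gcd c (p ^ j)) | 1)%Z).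
    { apply Hr; [exists (Z.of_nat k1) | exists (Z.of_nat k2)];
        rewrite <- ?Nat2Z.inj_pow; lia. }
    apply Z.divide_1_r_nonneg in Hz; lia.
Qed.

Lemma cubic_condition_p p c u : prime (Z.of_nat p) -> p <> 3%nat -> (c mod p <> 0)%nat ->
  ((c * 3 * u * u) mod p = 0)%nat <-> (u mod p = 0)%nat.
Proof.
  intros Hp H3 Hc. pose proof (prime_ge2 _ Hp) as Hp2. split.
  - intros H.
    destruct (prime_mod_mult _ _ _ Hp H) as [H1|]; auto.
    destruct (prime_mod_mult _ _ _ Hp H1) as [H2|]; auto.
    destruct (prime_mod_mult _ _ _ Hp H2) as [|H4]; [contradiction|].
    apply Nat.Lcm0.mod_divide in H4. destruct H4 as [[|[|k]] Hk]; lia.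
  - intros H. apply Nat.Lcm0.mod_divide in H. destruct H as [k ->].
    replace (c * 3 * (k * p) * (k * p))%nat with ((c * 3 * k * k * p) * p)%nat by ring.
    apply Nat.Div0.mod_mul.
Qed.

Lemma cubic_condition_p2 p c u : prime (Z.of_nat p) -> (c mod p <> 0)%nat ->
  ((c * 3 * u * u) mod (p * p) = 0)%nat <-> (u mod p = 0)%nat.
Proof.
  intros Hp Hc. pose proof (prime_ge2 _ Hp) as Hp2. split.
  - intros H. apply Nat.Lcm0.mod_divide in H. destruct H as [k Hk].
    destruct (Nat.eq_dec p 3) as [->|E].
    + assert (Hm : ((c * (u * u)) mod 3 = 0)%nat).
      { apply Nat.Lcm0.mod_divide. exists k. lia. }
      destruct (prime_mod_mult _ _ _ Hp Hm) as [|Hm']; [contradiction|].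
      destruct (prime_mod_mult _ _ _ Hp Hm'); tauto.
    + apply (cubic_condition_p p c u); auto.
      apply Nat.Lcm0.mod_divide. exists (k * p)%nat. lia.
  - intros H. apply Nat.Lcm0.mod_divide in H. destruct H as [k ->].
    replace (c * 3 * (k * p) * (k * p))%nat with ((c * 3 * k * k) * (p * p))%nat by ring.
    apply Nat.Div0.mod_mul.
Qed.

Lemma Snat_lift p c i : prime (Z.of_nat p) -> (c mod p <> 0)%nat -> (p = 3%nat \/ (1 <= i)%nat) ->
  Snat (p ^ (i + 3)) c = (RtoC (INR (p * p)) * Snat (p ^ i) c)%C.
Proof.
  intros Hp Hc Hi. pose proof (prime_ge2 _ Hp) as Hp2.
  assert (Hpi : (0 < p ^ i)%nat) by (apply Nat.neq_0_lt_0, Nat.pow_nonzero; lia).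
  assert (Hal : exists al, (3 * p ^ (i + 1) * p ^ (i + 1) = p ^ (i + 3) * al)%nat).
  { destruct Hi as [->|Hi].
    - exists (3 ^ i)%nat. rewrite !Nat.pow_add_r. simpl. ring.
    - exists (3 * p ^ (i - 1))%nat. replace i with (succ (i - 1)) at 1 2 3 by lia.
      rewrite !Nat.pow_add_r. simpl. ring. }
  destruct Hal as [al Hal].
  rewrite (Snat_reduce p (p ^ (i + 1)) (p * p) (p ^ i) (p ^ (i + 3)) c al (p ^ (2 * i)));
    try lia.
  - f_equal. apply fsum_ext. intros w _. f_equal.
    assert (INR (p ^ i) <> 0) by (apply not_0_INR; lia).
    assert (INR p <> 0) by (apply not_0_INR; lia).
    rewrite Nat.pow_add_r, !mult_INR, (pow_INR p 3). simpl. field. split; auto.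
  - rewrite !Nat.pow_add_r. simpl. ring.
  - rewrite Nat.pow_add_r. simpl. ring.
  - replace (2 * i)%nat with (i + i)%nat by lia. rewrite !Nat.pow_add_r. simpl. ring.
  - intros u. apply cubic_condition_p2; auto.
Qed.

Lemma Snat_one c : Snat 1 c = RtoC 1.
Proof.
  unfold Snat. simpl fsum. rewrite plus_zero_l, <- (e_nat 0).
  f_equal. simpl. unfold Rdiv. ring.
Qed.

Lemma Snat_p2 p c : prime (Z.of_nat p) -> p <> 3%nat -> (c mod p <> 0)%nat ->
  Snat (p ^ 2) c = RtoC (INR p).
Proof.
  intros Hp H3 Hc. pose proof (prime_ge2 _ Hp).
  rewrite (Snat_reduce p p p 1 (p ^ 2) c 3 p); try (simpl; lia).
  - simpl fsum. rewrite plus_zero_l.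
    transitivity (RtoC (INR p) * RtoC 1)%C; [f_equal | apply Cmult_1_r].
    rewrite <- (e_nat 0), Nat.mul_0_r. f_equal. simpl. unfold Rdiv. ring.
  - intros u. apply cubic_condition_p; auto.
Qed.

Lemma Snat_p3 p c : prime (Z.of_nat p) -> (c mod p <> 0)%nat ->
  Snat (p ^ 3) c = RtoC (INR (p * p)).
Proof.
  intros Hp Hc. pose proof (prime_ge2 _ Hp).
  destruct (Nat.eq_dec p 3) as [E|E].
  - change (p ^ 3)%nat with (p ^ (0 + 3))%nat.
    rewrite Snat_lift, Snat_one by auto. apply Cmult_1_r.
  - rewrite (Snat_reduce p (p * p) p p (p ^ 3) c (3 * p) (p * p * p)); try (simpl; lia).
    + rewrite (fsum_ext _ _ (fun _ => RtoC 1)).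
      * rewrite fsum_RtoC, fsum_const, mult_INR, <- RtoC_mult. f_equal. ring.
      * intros w _. replace (INR c * INR (p * w) ^ 3 / INR (p ^ 3)) with (INR (c * w * w * w)).
        { apply e_nat. }
        assert (INR p <> 0) by (apply not_0_INR; lia).
        rewrite pow_INR, !mult_INR. field. auto.
    + intros u. apply cubic_condition_p; auto.
Qed.

Lemma Snat_3 c : (c mod 3 <> 0)%nat -> Snat 3 c = RtoC 0.
Proof.
  intros Hc. rewrite <- (char_sum_not_divisible c 3) by lia. apply fsum_ext.
  intros m Hm. destruct m as [|[|[|m]]]; try lia; simpl INR.
  - rewrite mult_INR. f_equal. simpl. field.
  - rewrite mult_INR. f_equal. simpl. field.
  - (* [8 c / 3 = 2 c / 3 + 2 c] *)
    replace (INR c * (1 + 1) ^ 3 / (1 + 1 + 1)) with (INR (c * 2) / (1 + 1 + 1) + INR (2 * c))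
      by (rewrite !mult_INR; simpl; field).
    apply e_shift.
Qed.

Definition unit_moment (p q : nat) : R :=
  fsum q (fun c => if (c mod p =? 0)%nat then 0 else Cmod (Snat q c) ^ 6).

Lemma T_unit_moment p j : prime (Z.of_nat p) -> (1 <= j)%nat ->
  T (p ^ j) = / INR (p ^ j) ^ 7 * unit_moment p (p ^ j).
Proof.
  intros Hp Hj. pose proof (prime_ge2 _ Hp).
  assert (Hq : (1 <= p ^ j)%nat) by (apply Nat.neq_0_lt_0, Nat.pow_nonzero; lia).
  unfold T, unit_moment. f_equal. rewrite sum_n_m_fsum.
  set (F := fun c => if (Nat.gcd c (p ^ j) =? 1)%nat then Cmod (S (p ^ j) (Z.of_nat c)) ^ 6 else 0).
  transitivity (fsum (p ^ j) F).
  - apply (fsum_shift (p ^ j) F). unfold F.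
    rewrite Nat.gcd_diag, Nat.gcd_0_l, !S_Snat by auto.
    rewrite <- (Snat_periodic (p ^ j) 0 1), Nat.add_0_l, Nat.mul_1_r by auto. reflexivity.
  - apply fsum_ext. intros c _. unfold F.
    rewrite coprime_prime_power, S_Snat by auto. now destruct (c mod p =? 0)%nat.
Qed.

Lemma T_one : T 1 = 1.
Proof.
  unfold T. rewrite sum_n_m_fsum. cbn [fsum Nat.gcd Nat.eqb].
  rewrite S_Snat, Snat_one, Cmod_1 by lia.
  change (/ 1 ^ 7 * (zero + 1 ^ 6) = 1). change (zero : R) with 0. field.
Qed.

Lemma fsum_units_periodic p Q N (f : nat -> R) : (0 < p)%nat -> (Q mod p = 0)%nat ->
  (forall r t, f (r + Q * t)%nat = f r) ->
  fsum (Q * N) (fun c => if (c mod p =? 0)%nat then 0 else f c) =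
  INR N * fsum Q (fun c => if (c mod p =? 0)%nat then 0 else f c).
Proof.
  intros Hp HQ Hf. rewrite fsum_block, (fsum_mult_l (K := R_Ring)).
  apply fsum_ext. intros r _.
  rewrite (fsum_ext _ _ (fun _ => if (r mod p =? 0)%nat then 0 else f r)).
  - apply fsum_const.
  - intros t _. rewrite Hf. apply Nat.Lcm0.mod_divide in HQ. destruct HQ as [k ->].
    replace (r + k * p * t)%nat with (r + (k * t) * p)%nat by ring.
    now rewrite Nat.Div0.mod_add.
Qed.

Lemma fsum_units_const p (K : R) : (0 < p)%nat ->
  fsum p (fun c => if (c mod p =? 0)%nat then 0 else K) = (INR p - 1) * K.
Proof.
  intros Hp. replace p with (succ (p - 1)) at 1 by lia.
  rewrite fsum_first, Nat.Div0.mod_0_l.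
  rewrite (fsum_ext _ _ (fun _ => K)).
  - rewrite fsum_const, minus_INR by lia.
    change (0 + (INR p - 1) * K = (INR p - 1) * K). ring.
  - intros i Hi. rewrite Nat.mod_small by lia. reflexivity.
Qed.

Lemma unit_moment_const p N M : prime (Z.of_nat p) ->
  (forall c, (c mod p <> 0)%nat -> Cmod (Snat (p * N) c) = M) ->
  unit_moment p (p * N) = INR N * ((INR p - 1) * M ^ 6).
Proof.
  intros Hp HM. pose proof (prime_ge2 _ Hp). unfold unit_moment.
  rewrite (fsum_ext _ _ (fun c => if (c mod p =? 0)%nat then 0 else M ^ 6)).
  - rewrite fsum_units_periodic, fsum_units_const by (auto; lia || apply Nat.Div0.mod_same).
    reflexivity.
  - intros c _. destruct (c mod p =? 0)%nat eqn:E; auto.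
    apply Nat.eqb_neq in E. now rewrite HM.
Qed.

Lemma unit_moment_p2 p : prime (Z.of_nat p) -> p <> 3%nat ->
  unit_moment p (p ^ 2) = (INR p - 1) * INR p ^ 7.
Proof.
  intros Hp H3. change (p ^ 2)%nat with (p * (p * 1))%nat.
  rewrite (unit_moment_const p _ (INR p)); auto.
  - rewrite Nat.mul_1_r. ring.
  - intros c Hc. change (p * (p * 1))%nat with (p ^ 2)%nat.
    rewrite Snat_p2, Cmod_R, Rabs_pos_eq by (auto; apply pos_INR). reflexivity.
Qed.

Lemma unit_moment_p3 p : prime (Z.of_nat p) ->
  unit_moment p (p ^ 3) = (INR p - 1) * INR p ^ 14.
Proof.
  intros Hp. change (p ^ 3)%nat with (p * (p * (p * 1)))%nat.
  rewrite (unit_moment_const p _ (INR p ^ 2)); auto.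
  - rewrite Nat.mul_1_r, mult_INR. ring.
  - intros c Hc. change (p * (p * (p * 1)))%nat with (p ^ 3)%nat.
    rewrite Snat_p3, Cmod_R, Rabs_pos_eq by (auto; apply pos_INR). rewrite mult_INR. ring.
Qed.

Lemma unit_moment_3 : unit_moment 3 3 = 0.
Proof.
  change 3%nat with (3 * 1)%nat at 2.
  rewrite (unit_moment_const 3 1 0) by (exact prime_3 || (intros c Hc; now rewrite Snat_3, Cmod_0)).
  ring.
Qed.

(** The key recursion: [|S(p^(i+3),c)| = p^2 |S(p^i,c)|] and the moment picks up
    a further factor [p^3] from periodicity, so [T(p^(i+3)) = p^(-6) T(p^i)]. *)
Lemma unit_moment_lift p i : prime (Z.of_nat p) -> (1 <= i)%nat ->
  unit_moment p (p ^ (i + 3)) = INR p ^ 15 * unit_moment p (p ^ i).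
Proof.
  intros Hp Hi. pose proof (prime_ge2 _ Hp). unfold unit_moment.
  assert (Hpi : (1 <= p ^ i)%nat) by (apply Nat.neq_0_lt_0, Nat.pow_nonzero; lia).
  rewrite (fsum_ext _ _ (fun c => if (c mod p =? 0)%nat then 0
                                  else INR p ^ 12 * Cmod (Snat (p ^ i) c) ^ 6)).
  - rewrite Nat.pow_add_r, fsum_units_periodic; try lia.
    + rewrite pow_INR. replace (INR p ^ 15) with (INR p ^ 3 * INR p ^ 12) by ring.
      rewrite Rmult_assoc, (fsum_mult_l (K := R_Ring) (INR p ^ 12)).
      f_equal. apply fsum_ext. intros c _.
      destruct (c mod p =? 0)%nat; [symmetry; apply Rmult_0_r | reflexivity].
    + replace i with (succ (i - 1)) by lia. simpl. rewrite Nat.mul_comm. apply Nat.Div0.mod_mul.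
    + intros r t. now rewrite Snat_periodic.
  - intros c _. destruct (c mod p =? 0)%nat eqn:E; auto. apply Nat.eqb_neq in E.
    rewrite Snat_lift, Cmod_mult, Cmod_R, Rabs_pos_eq, mult_INR by (auto; apply pos_INR).
    simpl. ring.
Qed.

Lemma unit_moment_prime p : prime (Z.of_nat p) ->
  sum_n_m (fun c : nat => Cmod (S p (Z.of_nat c)) ^ 6) 1 (p - 1) = unit_moment p p.
Proof.
  intros Hp. pose proof (prime_ge2 _ Hp). unfold unit_moment.
  destruct p as [|n]; [lia|]. rewrite Nat.sub_succ, Nat.sub_0_r.
  rewrite sum_n_m_fsum, fsum_first, Nat.Div0.mod_0_l. cbn [Nat.eqb].
  change (plus ?a ?b) with (Rplus a b). rewrite Rplus_0_l.
  apply fsum_ext. intros i Hi. rewrite Nat.mod_small by lia. simpl (succ i =? 0)%nat.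
  rewrite S_Snat by lia. reflexivity.
Qed.

Lemma partial_sums_bounded (a : nat -> R) (r : R) : (forall k, 0 <= a k) -> 0 <= r < 1 ->
  (forall k, a (3 + k)%nat = r * a k) ->
  forall n, fsum n a <= (a 0%nat + a 1%nat + a 2%nat) / (1 - r).
Proof.
  intros Ha Hr Hrec. set (B := (a 0%nat + a 1%nat + a 2%nat) / (1 - r)).
  pose proof (Ha 0%nat); pose proof (Ha 1%nat); pose proof (Ha 2%nat).
  assert (HB : a 0%nat + a 1%nat + a 2%nat + r * B = B) by (unfold B; field; lra).
  assert (HB0 : 0 <= B) by (unfold B; apply Rdiv_le_0_compat; lra).
  assert (HrB : 0 <= r * B) by (apply Rmult_le_pos; lra).
  intros n. induction n as [n IH] using lt_wf_ind.
  destruct (le_lt_dec n 3) as [Hn|Hn].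
  - destruct n as [|[|[|[|n]]]]; simpl; try change (zero : R) with 0;
      repeat change (plus ?x ?y) with (Rplus x y); lra || lia.
  - replace n with (3 + (n - 3))%nat by lia. rewrite fsum_app.
    rewrite (fsum_ext (n - 3) _ (fun i => r * a i)) by (intros; apply Hrec).
    assert (Hscale : fsum (n - 3) (fun i => r * a i) = r * fsum (n - 3) a)
      by (symmetry; apply (fsum_mult_l (K := R_Ring))).
    rewrite Hscale. specialize (IH (n - 3)%nat ltac:(lia)).
    change (fsum 3 a) with (0 + a 0%nat + a 1%nat + a 2%nat).
    change (plus ?x ?y) with (Rplus x y).
    assert (r * fsum (n - 3) a <= r * B) by (apply Rmult_le_compat_l; lra). lra.
Qed.

Lemma one_minus_neq0 (w : C) : Cmod w < 1 -> (RtoC 1 - w)%C <> RtoC 0.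
Proof.
  intros Hw E. replace w with (RtoC 1 - (RtoC 1 - w))%C in Hw by ring.
  rewrite E in Hw. replace (RtoC 1 - RtoC 0)%C with (RtoC 1) in Hw by ring.
  rewrite Cmod_1 in Hw. lra.
Qed.

Lemma series_three_step (t : nat -> C) (w : C) : Cmod w < 1 ->
  (forall k, t (3 + k)%nat = (w * t k)%C) ->
  is_series t ((t 0%nat + t 1%nat + t 2%nat) / (RtoC 1 - w))%C
  /\ ex_series (fun k => Cmod (t k)).
Proof.
  intros Hw Hrec.
  assert (Habs : ex_series (fun k => Cmod (t k))).
  { assert (Hb := partial_sums_bounded (fun k => Cmod (t k)) (Cmod w)
      (fun k => Cmod_ge_0 _) (conj (Cmod_ge_0 _) Hw)
      (fun k => eq_trans (f_equal Cmod (Hrec k)) (Cmod_mult _ _))).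
    destruct (ex_finite_lim_seq_incr (sum_n (fun k => Cmod (t k)))
      ((Cmod (t 0%nat) + Cmod (t 1%nat) + Cmod (t 2%nat)) / (1 - Cmod w))) as [l Hl].
    - intros n. rewrite !sum_n_fsum.
      change (fsum (succ (succ n)) ?f) with (fsum (succ n) f + f (succ n)).
      pose proof (Cmod_ge_0 (t (succ n))). lra.
    - intros n. rewrite sum_n_fsum. apply Hb.
    - exists l. exact Hl. }
  split; [|exact Habs].
  destruct (ex_series_le (K := C_AbsRing) (V := C_CompleteNormedModule) t
              (fun k => Cmod (t k)) (fun n => Rle_refl _) Habs) as [L HL].
  change C in L.
  set (s3 := (t 0%nat + t 1%nat + t 2%nat)%C).
  (* the tail from index 3 sums both to [L - s3] and to [w L] *)
  assert (Htail1 : is_series (fun k => t (3 + k)%nat) (L - s3)%C).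
  { apply is_series_incr_n; [lia|]. simpl pred. rewrite sum_n_fsum.
    replace (plus _ _) with L; [exact HL|].
    change (L = L - s3 + (0 + t 0%nat + t 1%nat + t 2%nat))%C. unfold s3. ring. }
  assert (Htail2 : is_series (fun k => t (3 + k)%nat) (w * L)%C).
  { apply is_series_ext with (fun k => scal w (t k)).
    - intros n. now rewrite Hrec.
    - exact (is_series_scal (K := C_AbsRing) (V := C_NormedModule) w t L HL). }
  assert (Heq : (L - s3)%C = (w * L)%C).
  { apply (filterlim_locally_unique (K := C_AbsRing) (V := C_NormedModule)
             (F := eventually) (sum_n (fun k => t (3 + k)%nat))); assumption. }
  replace (s3 / (RtoC 1 - w))%C with L; [exact HL|].
  replace s3 with (L - (L - s3))%C by ring. rewrite Heq. field. now apply one_minus_neq0.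
Qed.

Lemma cpow_add x a b : cpow x (a + b)%C = (cpow x a * cpow x b)%C.
Proof.
  unfold cpow. destruct a as [a1 a2], b as [b1 b2]. simpl.
  rewrite Rmult_plus_distr_r, Rmult_plus_distr_r, exp_plus, cos_plus, sin_plus.
  apply injective_projections; simpl; ring.
Qed.

Lemma cpow_mult_base x y z : 0 < x -> 0 < y -> cpow (x * y) z = (cpow x z * cpow y z)%C.
Proof.
  intros Hx Hy. unfold cpow. rewrite ln_mult by auto.
  rewrite !Rmult_plus_distr_l, exp_plus, cos_plus, sin_plus.
  apply injective_projections; simpl; ring.
Qed.

Lemma cpow_nat x n : 0 < x -> cpow x (RtoC (INR n)) = RtoC (x ^ n).
Proof.
  intros Hx. unfold cpow. simpl. rewrite Rmult_0_l, cos_0, sin_0, <- ln_pow, exp_ln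
    by (auto; apply pow_lt; auto).
  apply injective_projections; simpl; ring.
Qed.

Lemma cpow_one_base z : cpow 1 z = RtoC 1.
Proof.
  unfold cpow. rewrite ln_1, !Rmult_0_r, exp_0, cos_0, sin_0.
  apply injective_projections; simpl; ring.
Qed.

Lemma cpow_pow_base x k s : 0 < x -> cpow (x ^ k) s = (cpow x s ^ k)%C.
Proof.
  intros Hx. induction k; simpl. { apply cpow_one_base. }
  rewrite cpow_mult_base, IHk by (auto; apply pow_lt; auto). reflexivity.
Qed.

Lemma Cmod_cpow x z : Cmod (cpow x z) = exp (Re z * ln x).
Proof.
  unfold cpow. rewrite Cmod_mult, Cmod_R, Rabs_pos_eq by (left; apply exp_pos).
  unfold Cmod. simpl. rewrite !Rmult_1_r.
  replace (cos (Im z * ln x) * cos (Im z * ln x) + sin (Im z * ln x) * sin (Im z * ln x))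
    with 1 by (pose proof (sin2_cos2 (Im z * ln x)); unfold Rsqr in *; lra).
  rewrite sqrt_1. ring.
Qed.

Lemma cpow_nonzero x z : cpow x z <> RtoC 0.
Proof.
  intros H. pose proof (exp_pos (Re z * ln x)).
  rewrite <- Cmod_cpow, H, Cmod_0 in *. lra.
Qed.


Lemma RtoC_neq0 x : x <> 0 -> RtoC x <> RtoC 0.
Proof. intros Hx E. apply Hx. now injection E. Qed.

Lemma euler_term p s j : prime (Z.of_nat p) -> (1 <= j)%nat ->
  (RtoC (T (p ^ j)) / cpow (INR (p ^ j)) s)%C
  = (RtoC (unit_moment p (p ^ j)) / cpow (INR p) (s + RtoC 7) ^ j)%C.
Proof.
  intros Hp Hj. pose proof (prime_ge2 _ Hp).
  assert (HP : 0 < INR p) by (apply lt_0_INR; lia).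
  assert (HQ : 0 < (INR p ^ 7) ^ j) by (apply pow_lt, pow_lt, HP).
  replace (RtoC 7) with (RtoC (INR 7)) by (f_equal; simpl; ring).
  rewrite T_unit_moment, pow_INR, cpow_pow_base, cpow_add, cpow_nat, Cpow_mult_l,
    <- RtoC_pow by auto.
  rewrite <- pow_mult, Nat.mul_comm, pow_mult, RtoC_mult, RtoC_inv by lra.
  field. split; [apply RtoC_neq0; lra | apply Cpow_nz, cpow_nonzero].
Qed.

Lemma euler_ratio_small P s : 1 < P -> -2 < Re s ->
  Cmod (RtoC (P ^ 15) / cpow P (s + RtoC 7) ^ 3)%C < 1.
Proof.
  intros HP Hs. set (D := cpow P (s + RtoC 7)).
  assert (HL : 0 < ln P) by (rewrite <- ln_1; apply ln_increasing; lra).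
  (* [|D| = P^(Re s + 7) > P^5] *)
  assert (Hbig : P ^ 5 < Cmod D).
  { unfold D. rewrite Cmod_cpow, <- (exp_ln (P ^ 5)), ln_pow by (apply pow_lt || idtac; lra).
    apply exp_increasing. change (Re (s + RtoC 7)) with (Re s + 7).
    replace (INR 5) with 5 by (simpl; ring). nra. }
  assert (HP5 : 0 < P ^ 5) by (apply pow_lt; lra).
  replace (RtoC (P ^ 15) / D ^ 3)%C with ((RtoC (P ^ 5) / D) ^ 3)%C
    by (rewrite !RtoC_pow; field; apply cpow_nonzero).
  rewrite Cmod_pow. apply pow_lt_1_compat; [split|lia].
  - apply Cmod_ge_0.
  - unfold Cdiv. rewrite Cmod_mult, Cmod_inv, Cmod_R, Rabs_pos_eq by (lra || apply cpow_nonzero).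
    apply Rmult_lt_reg_r with (Cmod D); [lra|].
    rewrite Rmult_assoc, Rinv_l, Rmult_1_r, Rmult_1_l by lra. exact Hbig.
Qed.

Lemma euler_factor_series p s : prime (Z.of_nat p) -> -2 < Re s ->
  let D := cpow (INR p) (s + RtoC 7) in
  let term := fun k : nat => (RtoC (T (p ^ k)) / cpow (INR (p ^ k)) s)%C in
  is_series term
    (RtoC 1 + (RtoC (unit_moment p p) / D + RtoC (unit_moment p (p ^ 2)) / D ^ 2
               + RtoC (unit_moment p (p ^ 3)) / D ^ 3)
              / (RtoC 1 - RtoC (INR p ^ 15) / D ^ 3))%C
  /\ ex_series (fun k => Cmod (term k)).
Proof.
  intros Hp Hs D term. pose proof (prime_ge2 _ Hp).
  assert (HP : 1 < INR p) by (apply (lt_INR 1); lia).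
  assert (Hterm : forall j, (1 <= j)%nat ->
    term j = (RtoC (unit_moment p (p ^ j)) / D ^ j)%C) by (intros; apply euler_term; auto).
  assert (Hrec : forall k, term (succ (3 + k)) = (RtoC (INR p ^ 15) / D ^ 3 * term (succ k))%C).
  { intros k. rewrite !Hterm by lia. replace (succ (3 + k)) with (succ k + 3)%nat by lia.
    rewrite unit_moment_lift, Cpow_add_r, RtoC_mult by (auto; lia).
    field. split; [apply Cpow_nz|]; apply cpow_nonzero. }
  destruct (series_three_step (fun k => term (succ k)) _ (euler_ratio_small _ _ HP Hs) Hrec)
    as [Hsum Habs].
  split; [|apply ex_series_incr_1; exact Habs].
  apply is_series_decr_1.
  assert (Hterm0 : term O = RtoC 1).
  { unfold term. rewrite Nat.pow_0_r, T_one. simpl INR. rewrite cpow_one_base. field. }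
  rewrite Hterm0, !Hterm in * by lia. rewrite !Nat.pow_1_r, !Cpow_1_r in *.
  replace (plus _ _) with ((RtoC (unit_moment p p) / D + RtoC (unit_moment p (p ^ 2)) / D ^ 2
      + RtoC (unit_moment p (p ^ 3)) / D ^ 3) / (RtoC 1 - RtoC (INR p ^ 15) / D ^ 3))%C.
  - exact Hsum.
  - change (plus ?x ?y) with (Cplus x y). change (opp ?x) with (Copp x). ring.
Qed.

Lemma euler_factor p s : prime (Z.of_nat p) -> -2 < Re s ->
  let P := INR p in
  let term := fun k : nat => (RtoC (T (p ^ k)) / cpow (INR (p ^ k)) s)%C in
  is_series term
    (/ (RtoC 1 - / cpow P (RtoC 3 * s + RtoC 6)) *
     (RtoC 1 + / cpow P (s + RtoC 7) * RtoC (unit_moment p p)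
      + / cpow P (RtoC 2 * s + RtoC 14) * RtoC (unit_moment p (p ^ 2))
      - / cpow P (RtoC 3 * s + RtoC 7)))%C
  /\ ex_series (fun k => Cmod (term k)).
Proof.
  intros Hp Hs P term. pose proof (prime_ge2 _ Hp).
  assert (HP : 1 < P) by (apply (lt_INR 1); lia).
  destruct (euler_factor_series p s Hp Hs) as [Hsum Habs]. split; [|exact Habs].
  fold P in Hsum. set (D := cpow P (s + RtoC 7)) in *.
  rewrite unit_moment_p3 in Hsum by auto. fold P in Hsum.
  (* all complex powers of [P] in the statement are [D^k] up to real powers of [P] *)
  assert (HD2 : cpow P (RtoC 2 * s + RtoC 14) = (D ^ 2)%C).
  { unfold D. simpl Cpow. rewrite Cmult_1_r, <- cpow_add. f_equal.
    apply injective_projections; simpl; ring. }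
  assert (HD3 : forall a n, a + INR n = 21 ->
                 (cpow P (RtoC 3 * s + RtoC a) * RtoC (P ^ n) = D ^ 3)%C).
  { intros a n Ha. unfold D. rewrite <- (cpow_nat P n), <- cpow_add by lra. simpl Cpow.
    rewrite Cmult_1_r, <- !cpow_add. f_equal. apply injective_projections; simpl; lra. }
  assert (HP0 : RtoC P <> RtoC 0) by (apply RtoC_neq0; lra).
  assert (HD0 : D <> RtoC 0) by apply cpow_nonzero.
  pose proof (one_minus_neq0 _ (euler_ratio_small P s HP Hs)) as Hw. fold D in Hw.
  replace (cpow P (RtoC 3 * s + RtoC 6)) with (D ^ 3 / RtoC (P ^ 15))%C
    by (rewrite <- (HD3 6 15%nat) by (simpl; lra); field; rewrite RtoC_pow; apply Cpow_nz; auto).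
  replace (cpow P (RtoC 3 * s + RtoC 7)) with (D ^ 3 / RtoC (P ^ 14))%C
    by (rewrite <- (HD3 7 14%nat) by (simpl; lra); field; rewrite RtoC_pow; apply Cpow_nz; auto).
  rewrite HD2. replace (/ (RtoC 1 - / (D ^ 3 / RtoC (P ^ 15))) * _)%C with
    (RtoC 1 + (RtoC (unit_moment p p) / D + RtoC (unit_moment p (p ^ 2)) / D ^ 2
               + RtoC ((P - 1) * P ^ 14) / D ^ 3) / (RtoC 1 - RtoC (P ^ 15) / D ^ 3))%C.
  { exact Hsum. }
  rewrite !RtoC_mult, RtoC_minus, !RtoC_pow in *. field. repeat split; auto.
  intros E. apply Hw.
  replace (RtoC 1 - RtoC P ^ 15 / D ^ 3)%C with ((D ^ 3 - RtoC P ^ 15) / D ^ 3)%C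
    by (field; auto).
  rewrite E. field. auto.
Qed.

Lemma unit_moment_9 :
  sum_n_m (fun c : nat => if Nat.eqb (Nat.gcd c 3) 1 then Cmod (S 9 (Z.of_nat c)) ^ 6 else 0)
    1 9 = unit_moment 3 (3 ^ 2).
Proof.
  rewrite sum_n_m_fsum. unfold unit_moment. change (3 ^ 2)%nat with 9%nat.
  set (F := fun c => if Nat.eqb (Nat.gcd c 3) 1 then Cmod (S 9 (Z.of_nat c)) ^ 6 else 0).
  transitivity (fsum 9 F); [now apply (fsum_shift 9 F)|].
  apply fsum_ext. intros c _. unfold F.
  change (Nat.gcd c 3) with (Nat.gcd c (3 ^ 1)).
  rewrite coprime_prime_power, S_Snat by (exact prime_3 || lia).
  now destruct (c mod 3 =? 0)%nat.
Qed.

Lemma euler_factor_prime_ne3 (s : C) (hs : -2 < Re s) (p : nat) :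
  prime (Z.of_nat p) -> p <> 3%nat ->
  let P := INR p in
  let term := fun k : nat => (RtoC (T (p ^ k)) / cpow (INR (p ^ k)) s)%C in
  is_series term
    (/ (RtoC 1 - / cpow P (RtoC 3 * s + RtoC 6)) *
     (RtoC 1
      + / cpow P (s + RtoC 7) *
          RtoC (sum_n_m (fun c : nat => (Cmod (S p (Z.of_nat c)) ^ 6)%R) 1 (p - 1))
      + RtoC (P - 1) / cpow P (RtoC 2 * s + RtoC 7)
      - / cpow P (RtoC 3 * s + RtoC 7)))%C
  /\ ex_series (fun k : nat => Cmod (term k)).
Proof.
  intros Hp H3 P term. pose proof (prime_ge2 _ Hp).
  assert (HP : 0 < P) by (apply lt_0_INR; lia).
  destruct (euler_factor p s Hp hs) as [Hsum Habs]. split; [|exact Habs].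
  rewrite unit_moment_prime by auto.
  replace (RtoC (P - 1) / cpow P (RtoC 2 * s + RtoC 7))%C
    with (/ cpow P (RtoC 2 * s + RtoC 14) * RtoC (unit_moment p (p ^ 2)))%C; [exact Hsum|].
  rewrite unit_moment_p2 by auto. fold P.
  replace (RtoC 2 * s + RtoC 14)%C with (RtoC 2 * s + RtoC 7 + RtoC (INR 7))%C
    by (apply injective_projections; simpl; ring).
  rewrite cpow_add, cpow_nat, RtoC_mult by lra.
  field. split; [apply cpow_nonzero | apply RtoC_neq0, pow_nonzero; lra].
Qed.

(** Part (2): [p = 3], where [S(3,c) = 0] kills [B_1]. *)
Lemma euler_factor_3 (s : C) (hs : -2 < Re s) :
  let term := fun k : nat => (RtoC (T (3 ^ k)) / cpow (INR (3 ^ k)) s)%C in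
  is_series term
    (/ (RtoC 1 - / cpow 3 (RtoC 3 * s + RtoC 6)) *
     (RtoC 1
      + / cpow 3 (RtoC 2 * s + RtoC 14) *
          RtoC (sum_n_m (fun c : nat => if Nat.eqb (Nat.gcd c 3) 1
                                        then (Cmod (S 9 (Z.of_nat c)) ^ 6)%R else 0%R) 1 9)
      - / cpow 3 (RtoC 3 * s + RtoC 7)))%C
  /\ ex_series (fun k : nat => Cmod (term k)).
Proof.
  intros term. destruct (euler_factor 3 s prime_3 hs) as [Hsum Habs]. split; [|exact Habs].
  replace (INR 3) with 3 in Hsum by (simpl; ring).
  rewrite unit_moment_3 in Hsum. rewrite unit_moment_9.
  match goal with |- is_series _ ?v => replace v with
     (/ (RtoC 1 - / cpow 3 (RtoC 3 * s + RtoC 6)) *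
      (RtoC 1 + / cpow 3 (s + RtoC 7) * RtoC 0
       + / cpow 3 (RtoC 2 * s + RtoC 14) * RtoC (unit_moment 3 (3 ^ 2))
       - / cpow 3 (RtoC 3 * s + RtoC 7)))%C by ring end.
  exact Hsum.
Qed.

Theorem lemma7 (s : C) (hs : (-2 < Re s)%R) :
  (forall p : nat, prime (Z.of_nat p) -> p <> 3%nat ->
     let P := INR p in
     let term := fun k : nat => (RtoC (T (p ^ k)) / cpow (INR (p ^ k)) s)%C in
     is_series term
       (/ (RtoC 1 - / cpow P (RtoC 3 * s + RtoC 6)) *
        (RtoC 1
         + / cpow P (s + RtoC 7) *
             RtoC (sum_n_m (G := R_AbelianMonoid)
                     (fun c : nat => (Cmod (S p (Z.of_nat c)) ^ 6)%R) 1 (p - 1))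
         + RtoC (P - 1) / cpow P (RtoC 2 * s + RtoC 7)
         - / cpow P (RtoC 3 * s + RtoC 7)))%C
     /\ ex_series (fun k : nat => Cmod (term k)))
  /\
  (let term := fun k : nat => (RtoC (T (3 ^ k)) / cpow (INR (3 ^ k)) s)%C in
   is_series term
     (/ (RtoC 1 - / cpow 3 (RtoC 3 * s + RtoC 6)) *
      (RtoC 1
       + / cpow 3 (RtoC 2 * s + RtoC 14) *
           RtoC (sum_n_m (G := R_AbelianMonoid)
                   (fun c : nat => if Nat.eqb (Nat.gcd c 3) 1
                                   then (Cmod (S 9 (Z.of_nat c)) ^ 6)%R else 0%R) 1 9)
       - / cpow 3 (RtoC 3 * s + RtoC 7)))%C
   /\ ex_series (fun k : nat => Cmod (term k))).
Proof.
  split.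
  - intros p Hp H3. exact (euler_factor_prime_ne3 s hs p Hp H3).
  - exact (euler_factor_3 s hs).
Qed.
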